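(* For every positive integer $m$, $d(m)=|N/P_{J(m)}|$, where $N$ is the multiplicative semigroup of all positive integers, $J(m)=mN$ is the ideal of $N$ generated by $m$, and $P_{J(m)}$ is the principal congruence on $N$ defined by $J(m)$.
   Context: $d(m)$ is the number of positive divisors of $m$. For a semigroup $S$, $H\subseteq S$, $a\in S$: $H\dots a=\{(x,y)\in S\times S: xay\in H\}$ and $P_H=\{(a,b)\in S\times S: H\dots a=H\dots b\}$. *)

From mathcomp Require Import all_boot.

Definition d (m : nat) : nat := size (divisors m).

(* The semigroup N = positive integers under multiplication; subsets of N
   are predicates on nat (only their values on positive integers matter). *)

Definition J (m : nat) : nat -> Prop := fun h => exists k, 0 < k /\ h = m * k.

Definition resid (H : nat -> Prop) (a : nat) : nat -> nat -> Prop :=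
  fun x y => 0 < x /\ 0 < y /\ H (x * a * y).

Definition PH (H : nat -> Prop) (a b : nat) : Prop :=
  0 < a /\ 0 < b /\ (forall x y, resid H a x y <-> resid H b x y).

Definition cls (H : nat -> Prop) (a : nat) : nat -> Prop := fun b => PH H a b.

Definition quot_card (H : nat -> Prop) (n : nat) : Prop :=
  exists f : 'I_n -> (nat -> Prop),
    injective f /\
    (forall i, exists a, 0 < a /\ f i = cls H a) /\
    (forall a, 0 < a -> exists i, f i = cls H a).

(* Modulo the ideal mN, the context (x, y) accepts a exactly when
   m / gcd(a, m) divides xy, and the divisor m / gcd(a, m) is recovered from
   the context (m / gcd(a, m), 1). Hence a and b are P_{mN}-equivalent iff
   gcd(a, m) = gcd(b, m), and the classes correspond to the divisors of m. *)

From Stdlib Require Import FunctionalExtensionality PropExtensionality.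
From mathcomp Require Import all_boot.

Lemma dvdn_mul_divn_gcd m a n : 0 < m -> (m %| a * n) = (m %/ gcdn a m %| n).
Proof.
move=> m_gt0; set g := gcdn a m.
have g_gt0 : 0 < g by rewrite gcdn_gt0 m_gt0 orbT.
have Em : m = m %/ g * g by rewrite divnK // dvdn_gcdr.
have Ea : a = a %/ g * g by rewrite divnK // dvdn_gcdl.
have co : coprime (m %/ g) (a %/ g).
  by rewrite /coprime gcdnC -(eqn_pmul2r g_gt0) mul1n muln_gcdl -Ea -Em.
by rewrite {1}Em {1}Ea mulnAC dvdn_pmul2r // Gauss_dvdr.
Qed.

Lemma J_dvdn m h : 0 < m -> 0 < h -> J m h <-> m %| h.
Proof.
move=> m_gt0 h_gt0; split; first by case=> k [_ ->]; apply: dvdn_mulr.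
move=> dvd_mh; exists (h %/ m); split; last by rewrite mulnC divnK.
by rewrite divn_gt0 // dvdn_leq.
Qed.

Lemma resid_J m a x y : 0 < m -> 0 < a ->
  resid (J m) a x y <-> [/\ 0 < x, 0 < y & m %/ gcdn a m %| x * y].
Proof.
move=> m_gt0 a_gt0; have xay_gt0 x' y' : 0 < x' -> 0 < y' -> 0 < x' * a * y'.
  by move=> x_gt0 y_gt0; rewrite !muln_gt0 x_gt0 a_gt0 y_gt0.
rewrite /resid -dvdn_mul_divn_gcd // mulnCA mulnA.
split=> [[x_gt0 [y_gt0]] | [x_gt0 y_gt0]].
- by move/(J_dvdn _ _ m_gt0 (xay_gt0 _ _ x_gt0 y_gt0)).
- by move/(J_dvdn _ _ m_gt0 (xay_gt0 _ _ x_gt0 y_gt0)).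
Qed.

Lemma PH_J m a b : 0 < m -> 0 < a -> 0 < b ->
  PH (J m) a b <-> gcdn a m = gcdn b m.
Proof.
move=> m_gt0 a_gt0 b_gt0.
have q_gt0 c : 0 < m %/ gcdn c m.
  by rewrite divn_gt0 ?gcdn_gt0 ?m_gt0 ?orbT // dvdn_leq // dvdn_gcdr.
split=> [[_ [_ same_resid]] | Egcd]; last first.
  by split=> //; split=> // x y; rewrite !resid_J // Egcd.
have dvd_q c c' : 0 < c -> 0 < c' ->
    (forall x y, resid (J m) c x y -> resid (J m) c' x y) ->
    m %/ gcdn c' m %| m %/ gcdn c m.
  move=> c_gt0 c'_gt0 sub_resid.
  have /sub_resid/resid_J[] // : resid (J m) c (m %/ gcdn c m) 1.
    by apply/resid_J; rewrite ?muln1.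
  by rewrite muln1.
have Eq_q : m %/ gcdn a m = m %/ gcdn b m.
  apply/eqP; rewrite eqn_dvd !dvd_q // => x y; apply same_resid.
apply/eqP; rewrite -(eqn_pmul2l (q_gt0 a)) {2}Eq_q !divnK ?dvdn_gcdr //.
Qed.

Section QuotientByInvariant.

Variables (H : nat -> Prop) (f : nat -> nat) (s : seq nat).
Hypothesis PH_f : forall a b, 0 < a -> 0 < b -> PH H a b <-> f a = f b.

Lemma cls_eq a b : 0 < a -> 0 < b -> cls H a = cls H b <-> f a = f b.
Proof.
move=> a_gt0 b_gt0; split=> [Ecls | Ef].
  have : cls H b b by apply/PH_f.
  by rewrite -Ecls => /(PH_f _ _ a_gt0 b_gt0).
apply: functional_extensionality => c; apply: propositional_extensionality.
split=> [Pac | Pbc].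
- have [_ [c_gt0 _]] := Pac; apply/(PH_f _ _ b_gt0 c_gt0).
  by rewrite -Ef; apply/PH_f.
- have [_ [c_gt0 _]] := Pbc; apply/(PH_f _ _ a_gt0 c_gt0).
  by rewrite Ef; apply/PH_f.
Qed.

Hypotheses (s_uniq : uniq s) (f_in_s : forall a, 0 < a -> f a \in s).
Hypothesis f_onto_s : forall x, x \in s -> exists2 a, 0 < a & f a = x.

Lemma quot_card_invariant : quot_card H (size s).
Proof.
pose pre x a := (0 < a) && (f a == x).
have pre_ex (i : 'I_(size s)) : exists a, pre (nth 0 s i) a.
  have [a a_gt0 Efa] := f_onto_s _ (mem_nth 0 (ltn_ord i)).
  by exists a; rewrite /pre a_gt0 Efa eqxx.
pose rep i := xchoose (pre_ex i).
have /all_and2[rep_gt0 f_rep] i : 0 < rep i /\ f (rep i) = nth 0 s i.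
  by have /andP[? /eqP] := xchooseP (pre_ex i).
exists (fun i => cls H (rep i)); split; last split.
- move=> i j /cls_eq; rewrite !f_rep => /(_ (rep_gt0 i) (rep_gt0 j)) Enth.
  by apply/val_inj/eqP; rewrite -(nth_uniq 0 (ltn_ord i) (ltn_ord j) s_uniq) Enth.
- by move=> i; exists (rep i).
- move=> a a_gt0; have idx_lt : index (f a) s < size s by rewrite index_mem f_in_s.
  exists (Ordinal idx_lt); apply/cls_eq => //.
  by rewrite f_rep nth_index ?f_in_s.
Qed.

End QuotientByInvariant.

Theorem theorem6 (m : nat) : 0 < m -> quot_card (J m) (d m).
Proof.
move=> m_gt0; apply: (@quot_card_invariant _ (gcdn ^~ m)).
- by move=> a b; apply: PH_J.
- exact: divisors_uniq.
- by move=> a _; rewrite -dvdn_divisors // dvdn_gcdr.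
- move=> x; rewrite -dvdn_divisors // => dvd_xm.
  by exists x; [apply: dvdn_gt0 dvd_xm | apply/gcdn_idPl].
Qed.
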